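(* Let $B\subseteq\mathbb{N}$ have positive upper density. Then there exist a unary function $f\in\mathscr{C}_{I_{\bar d=0}}$ and a strictly increasing sequence $(n_i)_{i\ge1}$ of natural numbers such that $f[B]\supseteq\bigcup_{i\ge1}[n_i,2n_i)$.
   Context: $\mathbb{N}=\{0,1,2,\dots\}$. For $A\subseteq\mathbb{N}$, $\bar d(A)=\limsup_{n\to\infty}\frac{|A\cap[0,n)|}{n}$. $\mathscr{C}_{I_{\bar d=0}}$ is the set of all finitary functions $f:\mathbb{N}^k\to\mathbb{N}$ ($k\ge1$) such that $\bar d(f[A^k])=0$ whenever $\bar d(A)=0$. Intervals are intervals of natural numbers. *)

From Stdlib Require Import Reals ClassicalEpsilon Fin.
From Coquelicot Require Import Coquelicot.
Open Scope R_scope.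

Fixpoint count_below (A : nat -> Prop) (n : nat) : nat :=
  match n with
  | O => O
  | S m => (count_below A m +
            (if excluded_middle_informative (A m) then 1 else 0))%nat
  end.

Definition upper_density (A : nat -> Prop) : Rbar :=
  LimSup_seq (fun n => INR (count_below A n) / INR n).

Definition image1 (f : nat -> nat) (A : nat -> Prop) : nat -> Prop :=
  fun y => exists x, A x /\ f x = y.

Definition imagek (k : nat) (f : (Fin.t k -> nat) -> nat) (A : nat -> Prop)
  : nat -> Prop :=
  fun y => exists x : Fin.t k -> nat, (forall i, A (x i)) /\ f x = y.

Definition in_C_dbar0 (k : nat) (f : (Fin.t k -> nat) -> nat) : Prop :=
  (1 <= k)%nat /\
  forall A : nat -> Prop, upper_density A = Finite 0 ->
    upper_density (imagek k f A) = Finite 0.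

Definition as_unary (f : nat -> nat) : (Fin.t 1 -> nat) -> nat :=
  fun x => f (x Fin.F1).

(* Write [r x = |B ∩ [0,x)|] for the rank of [x] in [B].  Positive upper density yields
   [K] and scales [N_i] with [N_i < K r(N_i)] and [r(N_i)] growing, and the ranks of the
   elements of [B] below [N_i] fill [[0, r(N_i))].  Let [f] send [x ∈ B] to its rank when
   that rank lies in some [[m_i, 2 m_i)], [m_i = ⌊r(N_i)/2⌋], and everything else to [0].
   Then [f[B]] contains every [[m_i, 2 m_i)], while [f x = v ≠ 0] forces
   [x < N_i < 3 K v]; hence [|f[A] ∩ [0,y)| <= 1 + |A ∩ [0, 3 K y)|], and [f] preserves
   upper density zero. *)
From Stdlib Require Import Reals Lia Lra ClassicalEpsilon.
From Coquelicot Require Import Coquelicot.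
Open Scope R_scope.

Lemma count_below_S A n : count_below A (S n) =
  (count_below A n + (if excluded_middle_informative (A n) then 1 else 0))%nat.
Proof. reflexivity. Qed.

Lemma count_below_mono A a b : (a <= b)%nat -> (count_below A a <= count_below A b)%nat.
Proof. induction 1; [lia|]. rewrite count_below_S. lia. Qed.

Lemma count_below_sub (A A' : nat -> Prop) y :
  (forall v, (v < y)%nat -> A v -> A' v) -> (count_below A y <= count_below A' y)%nat.
Proof.
  induction y as [|y IH]; intros H; [simpl; lia|]. rewrite !count_below_S.
  specialize (IH (fun v Hv => H v ltac:(lia))).
  destruct (excluded_middle_informative (A y)) as [a|a];
  destruct (excluded_middle_informative (A' y)) as [a'|a']; try lia.
  exfalso; apply a', H; auto.
Qed.

Lemma count_below_ext (A A' : nat -> Prop) y :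
  (forall v, A v <-> A' v) -> count_below A y = count_below A' y.
Proof.
  intros H. apply Nat.le_antisymm; apply count_below_sub; intros v _; apply H.
Qed.

Lemma count_below_union (A A1 A2 : nat -> Prop) y : (forall v, A v -> A1 v \/ A2 v) ->
  (count_below A y <= count_below A1 y + count_below A2 y)%nat.
Proof.
  intros H; induction y as [|y IH]; [simpl; lia|]. rewrite !count_below_S.
  destruct (excluded_middle_informative (A y)) as [a|a];
  destruct (excluded_middle_informative (A1 y)) as [a1|a1];
  destruct (excluded_middle_informative (A2 y)) as [a2|a2]; try lia.
  destruct (H y a); tauto.
Qed.

Lemma count_below_empty y : count_below (fun _ => False) y = 0%nat.
Proof.
  induction y as [|y IH]; [reflexivity|]. rewrite count_below_S.
  destruct (excluded_middle_informative False); [tauto|lia].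
Qed.

Lemma count_below_singleton c y : (count_below (fun v => v = c) y <= 1)%nat.
Proof.
  induction y as [|y IH]; [simpl; lia|]. rewrite count_below_S.
  destruct (excluded_middle_informative (y = c)) as [->|]; [|lia].
  enough (count_below (fun v => v = c) c <= count_below (fun _ => False) c)%nat
    by (rewrite count_below_empty in *; lia).
  apply count_below_sub; intros; lia.
Qed.

Lemma count_below_image (A : nat -> Prop) (h : nat -> nat) M y :
  (count_below (fun v => exists a, (a < M)%nat /\ A a /\ h a = v) y
   <= count_below A M)%nat.
Proof.
  induction M as [|M IH].
  - etransitivity; [apply (count_below_sub _ (fun _ => False))|].
    + intros v _ [a [Ha _]]; lia.
    + rewrite count_below_empty; simpl; lia.
  - rewrite count_below_S.
    etransitivity; [apply (count_below_union _
      (fun v => exists a, (a < M)%nat /\ A a /\ h a = v) (fun v => A M /\ v = h M))|].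
    { intros v [a [Ha [HA <-]]]. destruct (Nat.eq_dec a M) as [->|].
      - right; auto.
      - left; exists a; split; [lia|auto]. }
    destruct (excluded_middle_informative (A M)) as [HA|HA].
    + pose proof (count_below_singleton (h M) y).
      pose proof (count_below_sub (fun v => A M /\ v = h M) (fun v => v = h M) y
        (fun v _ H => proj2 H)). lia.
    + pose proof (count_below_sub (fun v => A M /\ v = h M) (fun _ => False) y
        (fun v _ H => HA (proj1 H))). rewrite count_below_empty in *. lia.
Qed.

Lemma count_below_rank B N y : (y < count_below B N)%nat ->
  exists x, (x < N)%nat /\ B x /\ count_below B x = y.
Proof.
  induction N as [|N IH]; [simpl; lia|]. rewrite count_below_S. intros H.
  destruct (Nat.lt_ge_cases y (count_below B N)) as [Hy|Hy].
  - destruct (IH Hy) as [x [? ?]]. exists x; split; [lia|auto].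
  - destruct (excluded_middle_informative (B N)); [|lia].
    exists N; repeat split; auto; lia.
Qed.

Lemma upper_density_spec A :
  is_LimSup_seq (fun n => INR (count_below A n) / INR n) (upper_density A).
Proof. exact (proj2_sig (ex_LimSup_seq _)). Qed.

Lemma upper_density_ext A A' :
  (forall v, A v <-> A' v) -> upper_density A = upper_density A'.
Proof.
  intros H. apply is_LimSup_seq_unique.
  apply (is_LimSup_seq_ext (fun n => INR (count_below A' n) / INR n));
    [|apply upper_density_spec].
  intros n. now rewrite (count_below_ext A A' n H).
Qed.

Lemma upper_density_eq0_intro A :
  (forall eps : posreal, exists N, forall n, (N <= n)%nat ->
     INR (count_below A n) <= eps * INR n) ->
  upper_density A = Finite 0.
Proof.
  intros H. apply is_LimSup_seq_unique. intros eps. split.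
  - intros N. exists N; split; [lia|].
    assert (0 <= INR (count_below A N) / INR N).
    { destruct N; [simpl; unfold Rdiv; rewrite Rinv_0; lra|].
      apply Rdiv_le_0_compat; [apply pos_INR | apply lt_0_INR; lia]. }
    pose proof (cond_pos eps). lra.
  - destruct (H (pos_div_2 eps)) as [N HN]. exists (S N). intros n Hn.
    assert (0 < INR n) by (apply lt_0_INR; lia).
    apply Rle_lt_trans with (eps / 2); [|pose proof (cond_pos eps); lra].
    apply Rle_div_l; [lra|]. apply HN; lia.
Qed.

Lemma upper_density_eq0_elim A : upper_density A = Finite 0 ->
  forall eps : posreal, exists N, forall n, (N <= n)%nat ->
    INR (count_below A n) <= eps * INR n.
Proof.
  intros H0 eps. pose proof (upper_density_spec A) as H. rewrite H0 in H.
  destruct (proj2 (H eps)) as [N HN]. exists (S N). intros n Hn.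
  apply Rlt_le, Rlt_div_l; [apply lt_0_INR; lia|].
  rewrite Rplus_0_l in HN. apply HN; lia.
Qed.

Lemma upper_density_pos_elim B : Rbar_lt (Finite 0) (upper_density B) ->
  exists K : nat, forall M, exists n, (M <= n)%nat /\ (n < K * count_below B n)%nat.
Proof.
  intros Hpos.
  assert (He : exists e, 0 < e /\ forall M, exists n, (M <= n)%nat /\
            e < INR (count_below B n) / INR n).
  { pose proof (upper_density_spec B) as H.
    destruct (upper_density B) as [l| |]; simpl in Hpos, H; [|exists 1; split; [lra|]|];
      try contradiction.
    - assert (Hl : 0 < l / 2) by lra. exists (l / 2); split; [lra|]. intros M.
      destruct (proj1 (H (mkposreal _ Hl)) M) as [n Hn]; simpl in Hn.
      exists n; split; [tauto|lra].
    - intros M; apply H. }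
  destruct He as [e [He Hinf]].
  destruct (INR_unbounded (/ e)) as [K HK].
  exists K. intros M. destruct (Hinf (S M)) as [n [HMn Hn]].
  exists n; split; [lia|].
  assert (0 < INR n) by (apply lt_0_INR; lia).
  apply Rlt_div_r in Hn; [|lra].
  assert (1 < INR K * e).
  { apply (Rmult_lt_compat_r e) in HK; [|lra]. rewrite Rinv_l in HK; lra. }
  apply INR_lt. rewrite mult_INR. pose proof (pos_INR K). nra.
Qed.

(* Every [v < y] in [f[A]] is [0] or the image of some [x ∈ A] with [x < C y]. *)
Lemma count_below_image1_le f C A y :
  (forall x, f x <> 0%nat -> (x < C * f x)%nat) ->
  (count_below (image1 f A) y <= 1 + count_below A (C * y))%nat.
Proof.
  intros Hf.
  set (preim := fun v => exists a, (a < C * y)%nat /\ A a /\ f a = v).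
  etransitivity; [apply (count_below_sub _ (fun v => v = 0%nat \/ preim v))|].
  { intros v Hv [x [Hx <-]]. destruct (Nat.eq_dec (f x) 0) as [|H0]; [now left|right].
    exists x. specialize (Hf x H0). repeat split; auto; nia. }
  etransitivity; [apply count_below_union; intros v Hv; exact Hv|].
  pose proof (count_below_singleton 0 y). pose proof (count_below_image A f (C * y) y).
  unfold preim. lia.
Qed.

Lemma upper_density_image1_eq0 f C A :
  (forall x, f x <> 0%nat -> (x < C * f x)%nat) ->
  upper_density A = Finite 0 -> upper_density (image1 f A) = Finite 0.
Proof.
  intros Hf HA. apply upper_density_eq0_intro. intros eps.
  assert (Hf' : forall x, f x <> 0%nat -> (x < S C * f x)%nat)
    by (intros x Hx; specialize (Hf x Hx); nia).
  assert (HC : 0 < INR (S C)) by (apply lt_0_INR; lia).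
  assert (Heps : 0 < eps / (2 * INR (S C))) by (pose proof (cond_pos eps);
    apply Rdiv_lt_0_compat; lra).
  destruct (upper_density_eq0_elim A HA (mkposreal _ Heps)) as [N HN].
  cbn [pos] in HN.
  destruct (INR_unbounded (2 / eps)) as [N1 HN1].
  exists (max N N1). intros y Hy.
  specialize (HN (S C * y)%nat ltac:(nia)).
  pose proof (count_below_image1_le f (S C) A y Hf') as Hle.
  apply le_INR in Hle. rewrite plus_INR in Hle.
  rewrite mult_INR in HN.
  assert (HN1y : INR N1 <= INR y) by (apply le_INR; lia).
  assert (2 <= eps * INR y).
  { pose proof (cond_pos eps). apply Rlt_div_l in HN1; [|lra]. nra. }
  replace (eps / (2 * INR (S C)) * (INR (S C) * INR y)) with (eps * INR y / 2) in HN
    by (field; lra).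
  change (INR 1) with 1 in Hle. lra.
Qed.

Lemma in_C_dbar0_unary f :
  (forall A, upper_density A = Finite 0 -> upper_density (image1 f A) = Finite 0) ->
  in_C_dbar0 1 (as_unary f).
Proof.
  intros Hf. split; [lia|]. intros A HA. rewrite <- (Hf A HA).
  apply upper_density_ext. intros v; split.
  - intros [x [Hx Hv]]. exists (x Fin.F1); auto.
  - intros [x [Hx Hv]]. exists (fun _ => x); split; auto.
Qed.

Lemma rank_scales B K :
  (forall M, exists n, (M <= n)%nat /\ (n < K * count_below B n)%nat) ->
  exists N : nat -> nat, forall i,
    (N i < K * count_below B (N i))%nat /\
    (count_below B (N i) + 2 <= count_below B (N (S i)))%nat.
Proof.
  intros H. destruct (choice _ H) as [g Hg].
  set (N := nat_rect (fun _ => nat) (g 0%nat)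
              (fun _ p => g (K * (count_below B p + 2))%nat)).
  exists N. intros i.
  assert (HN : forall j, (N j < K * count_below B (N j))%nat)
    by (intros [|j]; apply Hg).
  split; [apply HN|].
  pose proof (HN (S i)). pose proof (proj1 (Hg (K * (count_below B (N i) + 2))%nat)).
  change (N (S i)) with (g (K * (count_below B (N i) + 2))%nat) in *. nia.
Qed.

Section RankRestriction.

Variables (B : nat -> Prop) (K : nat) (N : nat -> nat).
Hypothesis N_dense : forall i, (N i < K * count_below B (N i))%nat.
Hypothesis N_rank_gap :
  forall i, (count_below B (N i) + 2 <= count_below B (N (S i)))%nat.

Definition half_rank i := (count_below B (N i) / 2)%nat.

Definition rank_restriction x :=
  if excluded_middle_informative
       (B x /\ exists i, (half_rank i <= count_below B x < 2 * half_rank i)%nat)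
  then count_below B x else 0%nat.

Lemma half_rank_spec i :
  (2 * half_rank i <= count_below B (N i) <= 2 * half_rank i + 1)%nat.
Proof.
  unfold half_rank. pose proof (Nat.div_mod_eq (count_below B (N i)) 2).
  pose proof (Nat.mod_upper_bound (count_below B (N i)) 2). lia.
Qed.

Lemma half_rank_lt_succ i : (half_rank i < half_rank (S i))%nat.
Proof.
  pose proof (half_rank_spec i); pose proof (half_rank_spec (S i)).
  pose proof (N_rank_gap i); lia.
Qed.

Lemma rank_restriction_bound x :
  rank_restriction x <> 0%nat -> (x < 3 * K * rank_restriction x)%nat.
Proof.
  unfold rank_restriction.
  destruct (excluded_middle_informative _) as [[_ [i Hi]]|]; [intros Hx|lia].
  pose proof (half_rank_spec i). pose proof (N_dense i).
  assert (x < N i)%nat.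
  { destruct (Nat.lt_ge_cases x (N i)) as [|Hle]; [auto|].
    pose proof (count_below_mono B _ _ Hle). lia. }
  nia.
Qed.

Lemma rank_restriction_onto i y :
  (half_rank i <= y < 2 * half_rank i)%nat -> image1 rank_restriction B y.
Proof.
  intros Hy. destruct (count_below_rank B (N i) y) as [x [_ [Hx <-]]].
  { pose proof (half_rank_spec i). lia. }
  exists x. split; [auto|]. unfold rank_restriction.
  destruct (excluded_middle_informative _) as [|Hn]; [auto|].
  exfalso; apply Hn. split; [auto|]. exists i. lia.
Qed.

End RankRestriction.

Theorem mainTheorem10 (B : nat -> Prop) :
  Rbar_lt (Finite 0) (upper_density B) ->
  exists (f : nat -> nat) (n : nat -> nat),
    in_C_dbar0 1 (as_unary f) /\
    (forall i j, (i < j)%nat -> (n i < n j)%nat) /\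
    (forall i m, (n i <= m < 2 * n i)%nat -> image1 f B m).
Proof.
  intros Hpos.
  destruct (upper_density_pos_elim B Hpos) as [K HK].
  destruct (rank_scales B K HK) as [N HN].
  exists (rank_restriction B N), (half_rank B N). split; [|split].
  - apply in_C_dbar0_unary. intros A.
    apply (upper_density_image1_eq0 _ (3 * K)).
    apply rank_restriction_bound; apply HN.
  - intros i j Hij. induction Hij as [|j _ IH].
    + apply half_rank_lt_succ, HN.
    + pose proof (half_rank_lt_succ B N (fun i => proj2 (HN i)) j). lia.
  - intros i m Hm. exact (rank_restriction_onto B N i m Hm).
Qed.
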